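(* Assume the set $\mathcal{E}_1=\{u_1<u_2<\cdots\}$ and $\mathcal{E}_3=\{v_1<v_2<\cdots\}$ are both infinite and that $n_\ell>64$ for all $\ell$. Let $k\ge2$ be an integer. For $1\le m\le 8k-4$ write $m=8q+r$ where $0\le q\le k-2$, $1\le r\le 8$ if $m\le 8k-8$, and $q=k-1$, $1\le r\le 4$ if $8k-7\le m\le 8k-4$. Then there exist strictly increasing sequences of nonnegative integers $x_0<x_1<\dots<x_{8k-4}$ and $y_0<y_1<\dots<y_{8k-4}$ with $x_0=y_0=0$ such that every integer $X$ satisfying the system of congruences \[ X\equiv 0\pmod 4,\qquad X+m\equiv 0\ \Bigl(\bmod\ \prod_{x_{m-1}<n\le x_m}u_n\cdot\prod_{y_{m-1}<n\le y_m}v_n\Bigr)\quad(1\le m\le 8k-4) \] has the following two properties: (C1) for $1\le m\le 8k-8$, $X+m$ is divisible by exactly $2^q$ of the integers $u_n$ with $n\le x_m$ and by exactly $2^q$ of the integers $v_n$ with $n\le y_m$; (C2) for $8k-7\le m\le 8k-4$ (so $m=8(k-1)+r$), $X+m$ is divisible by exactly $k^r2^{k-1}$ of the integers $u_n$ with $n\le x_m$ and by exactly $2^{k-1}$ of the integers $v_n$ with $n\le y_m$.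
   Context: $\{n_\ell\}_{\ell\ge1}$ is a strictly increasing sequence of positive odd integers, any two distinct terms of which are coprime, with $\sum_\ell 1/n_\ell<\infty$. $\mathcal{E}_1$ (resp. $\mathcal{E}_3$) is the set of terms $n_\ell$ congruent to $1$ (resp. $3$) modulo $4$, enumerated increasingly as $u_1<u_2<\cdots$ (resp. $v_1<v_2<\cdots$). *)

From HB Require Import structures.
From mathcomp Require Import all_boot all_order all_algebra.
Set Implicit Arguments. Unset Strict Implicit. Unset Printing Implicit Defensive.
Import Order.TTheory GRing.Theory Num.Theory.

(* Sequences are 1-indexed: the value of a sequence at index 0 is irrelevant. *)

Definition count_div (w : nat -> nat) (N : nat) (Z : int) : nat :=
  count (fun i => ((w i)%:Z %| Z)%Z) (iota 1 N).

Definition prod_range (w : nat -> nat) (a b : nat) : nat :=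
  \prod_(a.+1 <= i < b.+1) w i.

From HB Require Import structures.
From mathcomp Require Import all_boot all_order all_algebra zify.
Import Order.TTheory GRing.Theory Num.Theory.

Set Implicit Arguments.
Unset Strict Implicit.

(* The theorem is an exact-counting statement about a "block" construction,
   done independently for the sequence u and for the sequence v.  Given a
   strictly increasing sequence w with all terms > 64 and target counts T m,
   choose block boundaries 0 = x 0 < x 1 < ... < x M; the congruence system
   forces every w i with i in block m, i.e. x (m-1) < i <= x m, to divide X + m.
   An index i of an earlier block m' < m then divides X + m exactly when
   w i divides m - m' (a number < m), so the earlier hits are determined by x
   alone and, since w i > 64, there are at most (m-1) - 64 of them.  Choosing
   the length of block m as T m minus the earlier hits makes the count of
   divisors of X + m among w 1, ..., w (x m) exactly T m, which works as soon
   as T m > (m-1) - 64.  The file develops: divisibility facts, counting small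
   values of an increasing sequence, blocks of a boundary sequence, the exact
   count for a given boundary sequence, the recursive choice of boundaries, and
   finally the numerical check that the targets 2^q and k^r 2^(k-1) are large
   enough. *)

Lemma dvd_prod_range (w : nat -> nat) a b i :
  a < i <= b -> w i %| prod_range w a b.
Proof.
move=> Hi; rewrite /prod_range (bigD1_seq i) ?iota_uniq //=.
  exact: dvdn_mulr.
by rewrite mem_index_iota; lia.
Qed.

Lemma dvdz_shift (d m' m : nat) (X : int) : m' <= m ->
  (d%:Z %| (X + m'%:Z)%R)%Z -> (d%:Z %| (X + m%:Z)%R)%Z = (d %| m - m').
Proof.
move=> le_m'm dvd_m'.
have -> : (X + m%:Z = (X + m'%:Z) + (m - m')%:Z)%R.
  by rewrite -addrA -PoszD subnKC.
by rewrite rpredDl // dvdzE.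
Qed.

Lemma incr_pos_inj (w : nat -> nat) :
  (forall i, 1 <= i -> w i < w i.+1) ->
  forall i j, 1 <= i -> 1 <= j -> w i = w j -> i = j.
Proof.
move=> w_incr.
have homo : {in [pred i | 0 < i] &, {homo w : i j / i < j}}.
  apply: homo_ltn_in => [y x z|i j|i]; first exact: ltn_trans.
    by rewrite !inE => Hi _ l /andP[lt_il _]; apply: leq_trans lt_il.
  by rewrite inE => /w_incr.
move=> i j Hi Hj E; have [lt_ij|lt_ji|//] := ltngtP i j.
- by have := homo i j Hi Hj lt_ij; rewrite E ltnn.
- by have := homo j i Hj Hi lt_ji; rewrite E ltnn.
Qed.

(* At most b - 64 terms of an increasing sequence of integers > 64 are <= b,
   since their values are distinct elements of 65, ..., b. *)
Lemma count_small_values (w : nat -> nat) (w_big : forall i, 1 <= i -> 64 < w i)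
  (w_incr : forall i, 1 <= i -> w i < w i.+1) N b :
  count (fun i => w i <= b) (iota 1 N) <= b - 64.
Proof.
rewrite -size_filter -(size_map w) -(size_iota 65 (b - 64)).
apply: uniq_leq_size.
  rewrite map_inj_in_uniq ?filter_uniq ?iota_uniq //.
  move=> i j; rewrite !mem_filter !mem_iota => /andP[_ /andP[Hi _]] /andP[_ /andP[Hj _]].
  exact: incr_pos_inj.
move=> z /mapP[i]; rewrite mem_filter mem_iota => /andP[Hb /andP[Hi _]] ->.
have := w_big i Hi; rewrite mem_iota; lia.
Qed.

Lemma block_exists (x : nat -> nat) m i : x 0 = 0 -> 0 < i <= x m ->
  exists2 m', 0 < m' <= m & x m'.-1 < i <= x m'.
Proof.
move=> x0; elim: m => [|m IH] Hi; first by rewrite x0 in Hi; lia.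
case: (leqP i (x m)) => H; last by exists m.+1 => //=; lia.
by have [m' Hm' Hb] := IH (ltac:(lia)); exists m' => //; lia.
Qed.

Section IncreasingBoundaries.
Variables (x : nat -> nat) (M : nat).
Hypothesis x_incr : forall j, j < M -> x j < x j.+1.

Lemma boundaries_homo a b : a <= b -> b <= M -> x a <= x b.
Proof.
move=> le_ab le_bM.
have homo : {in [pred j | j <= M] &, {homo x : a b / a <= b}}.
  apply: homo_leq_in => [//|y z t|i j|i]; first exact: leq_trans.
    by rewrite !inE => _ le_jM l /andP[_ lt_lj]; apply: ltnW (leq_trans lt_lj le_jM).
  by rewrite !inE => _ /x_incr /ltnW.
by apply: homo => //; rewrite inE; lia.
Qed.

Lemma block_unique a b i : 0 < a <= M -> 0 < b <= M ->
  x a.-1 < i <= x a -> x b.-1 < i <= x b -> a = b.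
Proof.
move=> Ha Hb Hia Hib; have [lt_ab|lt_ba|//] := ltngtP a b.
- by have := @boundaries_homo a b.-1 (ltac:(lia)) (ltac:(lia)); lia.
- by have := @boundaries_homo b a.-1 (ltac:(lia)) (ltac:(lia)); lia.
Qed.

End IncreasingBoundaries.

(* The indices i of the blocks m' < m with w i | m - m': under the congruence
   system these are exactly the earlier indices for which w i | X + m. *)
Definition earlier_hits (w x : nat -> nat) (m : nat) : nat :=
  count (fun i => has (fun m' => (x m'.-1 < i <= x m') && (w i %| m - m'))
                      (iota 1 m.-1)) (iota 1 (x m.-1)).

(* Such w i divide a number below m, and only m.-1 - 64 values are available. *)
Lemma earlier_hits_bound (w : nat -> nat) (w_big : forall i, 1 <= i -> 64 < w i)
  (w_incr : forall i, 1 <= i -> w i < w i.+1) x m :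
  earlier_hits w x m <= m.-1 - 64.
Proof.
apply: leq_trans (count_small_values w_big w_incr (x m.-1) m.-1).
apply: sub_count => i /hasP[m']; rewrite mem_iota => Hm' /andP[_ Hd].
have := dvdn_leq (ltac:(lia) : 0 < m - m') Hd; lia.
Qed.

Lemma earlier_hits_ext w x x' m : 0 < m -> (forall j, j < m -> x j = x' j) ->
  earlier_hits w x m = earlier_hits w x' m.
Proof.
move=> Hm E; rewrite /earlier_hits E; last by lia.
apply: eq_count => i; apply: eq_in_has => m'; rewrite mem_iota => Hm'.
by rewrite !E //; lia.
Qed.

Lemma count_div_blocks (w x : nat -> nat) M (X : int) : x 0 = 0 ->
  (forall j, j < M -> x j < x j.+1) ->
  (forall m, 0 < m <= M -> ((prod_range w (x m.-1) (x m))%:Z %| (X + m%:Z)%R)%Z) ->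
  forall m, 0 < m <= M ->
  count_div w (x m) (X + m%:Z)%R = earlier_hits w x m + (x m - x m.-1).
Proof.
move=> x0 x_incr block_dvd.
have dvd_in_block m' i : 0 < m' <= M -> x m'.-1 < i <= x m' ->
    ((w i)%:Z %| (X + m'%:Z)%R)%Z.
  move=> Hm' Hi; apply: dvdz_trans (block_dvd m' Hm').
  by rewrite dvdzE; apply: dvd_prod_range.
move=> m Hm; have le_x : x m.-1 <= x m.
  by rewrite -[in x m](prednK (ltac:(lia) : 0 < m)); apply/ltnW/x_incr; lia.
rewrite /count_div -(subnKC le_x) iotaD count_cat addKn.
congr (_ + _).
  apply: eq_in_count => i; rewrite mem_iota => Hi.
  have [m' Hm' Hb] := block_exists x0 (ltac:(lia) : 0 < i <= x m.-1).
  rewrite (dvdz_shift (ltac:(lia) : m' <= m)); last by apply: dvd_in_block => //; lia.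
  apply/idP/hasP => [Hd | [m'' Hm'' /andP[Hb'' Hd]]].
    by exists m' => //; rewrite ?mem_iota ?Hb ?Hd //; lia.
  move: Hm''; rewrite mem_iota => Hm''.
  by rewrite -(block_unique x_incr (ltac:(lia) : 0 < m'' <= M) (ltac:(lia) : 0 < m' <= M) Hb'' Hb).
rewrite (eq_in_count (a2 := predT)) ?count_predT ?size_iota //.
move=> i; rewrite mem_iota => Hi; apply: dvd_in_block => //; lia.
Qed.

Lemma exists_boundaries (w T : nat -> nat) (w_big : forall i, 1 <= i -> 64 < w i)
  (w_incr : forall i, 1 <= i -> w i < w i.+1) M :
  (forall m, 0 < m <= M -> m.-1 - 64 < T m) ->
  exists x : nat -> nat, x 0 = 0 /\ forall m, 0 < m <= M ->
    x m = x m.-1 + (T m - earlier_hits w x m) /\ earlier_hits w x m < T m.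
Proof.
elim: M => [|M IH] T_big; first by exists (fun _ => 0); split => // m; lia.
have [x [x0 Hx]] := IH (fun m Hm => T_big m (ltac:(lia))).
pose x' j := if j <= M then x j else x M + (T M.+1 - earlier_hits w x M.+1).
have hits_x' m : 0 < m <= M.+1 -> earlier_hits w x' m = earlier_hits w x m.
  move=> Hm; apply: earlier_hits_ext => [|j Hj]; first by lia.
  by rewrite /x' ifT //; lia.
exists x'; split; first by rewrite /x'.
move=> m Hm; rewrite hits_x' //.
case: (leqP m M) => HmM; first by rewrite /x' ifT // ifT; [apply: Hx; lia | lia].
have -> : m = M.+1 by lia.
rewrite /x' ifF ?ltnn //= ifT //; split => //.
apply: leq_ltn_trans (earlier_hits_bound w_big w_incr x M.+1) (T_big M.+1 _); lia.
Qed.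

Lemma exact_divisor_counts (w T : nat -> nat) (w_big : forall i, 1 <= i -> 64 < w i)
  (w_incr : forall i, 1 <= i -> w i < w i.+1) M :
  (forall m, 0 < m <= M -> m.-1 - 64 < T m) ->
  exists x : nat -> nat, [/\ x 0 = 0, forall j, j < M -> x j < x j.+1 &
    forall X : int,
      (forall m, 0 < m <= M -> ((prod_range w (x m.-1) (x m))%:Z %| (X + m%:Z)%R)%Z) ->
      forall m, 0 < m <= M -> count_div w (x m) (X + m%:Z)%R = T m].
Proof.
move=> T_big; have [x [x0 Hx]] := exists_boundaries w_big w_incr T_big.
have x_incr j : j < M -> x j < x j.+1.
  by move=> Hj; have [E L] := Hx j.+1 (ltac:(lia)); rewrite E /=; lia.
exists x; split => // X block_dvd m Hm.
rewrite (count_div_blocks x0 x_incr block_dvd Hm).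
by have [E L] := Hx m Hm; rewrite E addKn subnKC // ltnW.
Qed.

Lemma pow2_linear_bound q : 8 * q < 2 ^ q + 57.
Proof.
case: (leqP q 7) => H; first by have := expn_gt0 2 q; lia.
rewrite -(subnKC H) expnD.
have := ltn_expl (q - 8) (isT : 1 < 2); have : 2 ^ 8 = 256 by []; lia.
Qed.

Lemma admissible_target m T : 2 ^ ((m - 1) %/ 8) <= T -> m.-1 - 64 < T.
Proof.
move=> le_T; apply: leq_trans le_T.
have := pow2_linear_bound ((m - 1) %/ 8); lia.
Qed.

Lemma enum_big (n w : nat -> nat) (n_big : forall l, 1 <= l -> 64 < n l)
  (P : nat -> Prop)
  (w_enum : forall a, (exists2 l, 1 <= l & n l = a /\ P a)
                      <-> (exists2 i, 1 <= i & w i = a)) :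
  forall i, 1 <= i -> 64 < w i.
Proof.
move=> i Hi; have [l Hl [<- _]] := (proj2 (w_enum (w i))) (ex_intro2 _ _ i Hi erefl).
exact: n_big.
Qed.

Theorem lemma1 (n u v : nat -> nat) (k : nat)
  (n_incr : forall l, 1 <= l -> n l < n l.+1)
  (n_pos : forall l, 1 <= l -> 0 < n l)
  (n_odd : forall l, 1 <= l -> odd (n l))
  (n_cop : forall i j, 1 <= i -> 1 <= j -> i != j -> coprime (n i) (n j))
  (n_sum : exists B : rat, forall N,
      (\sum_(1 <= l < N) ((n l)%:R)^-1 <= B)%R)
  (n_big : forall l, 1 <= l -> 64 < n l)
  (u_incr : forall i, 1 <= i -> u i < u i.+1)
  (u_enum : forall a, (exists2 l, 1 <= l & n l = a /\ a %% 4 = 1)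
                      <-> (exists2 i, 1 <= i & u i = a))
  (v_incr : forall i, 1 <= i -> v i < v i.+1)
  (v_enum : forall a, (exists2 l, 1 <= l & n l = a /\ a %% 4 = 3)
                      <-> (exists2 i, 1 <= i & v i = a))
  (hk : 2 <= k) :
  exists x y : nat -> nat,
    [/\ x 0 = 0, y 0 = 0,
        (forall i, i < 8 * k - 4 -> x i < x i.+1),
        (forall i, i < 8 * k - 4 -> y i < y i.+1) &
    forall X : int,
      (4 %| X)%Z ->
      (forall m, 1 <= m <= 8 * k - 4 ->
         ((prod_range u (x m.-1) (x m) * prod_range v (y m.-1) (y m))%:Z
            %| (X + m%:Z)%R)%Z) ->
      (forall m, 1 <= m <= 8 * k - 8 ->
         count_div u (x m) ((X + m%:Z)%R) = 2 ^ ((m - 1) %/ 8) /\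
         count_div v (y m) ((X + m%:Z)%R) = 2 ^ ((m - 1) %/ 8)) /\
      (forall m, 8 * k - 7 <= m <= 8 * k - 4 ->
         count_div u (x m) ((X + m%:Z)%R) = k ^ (m - 8 * (k - 1)) * 2 ^ (k - 1) /\
         count_div v (y m) ((X + m%:Z)%R) = 2 ^ (k - 1))].
Proof.
pose Tv m := 2 ^ ((m - 1) %/ 8).
pose Tu m := if m <= 8 * k - 8 then Tv m else k ^ (m - 8 * (k - 1)) * Tv m.
have Tu_big m : 0 < m <= 8 * k - 4 -> m.-1 - 64 < Tu m.
  move=> _; apply: admissible_target; rewrite /Tu /Tv; case: ifP => // _.
  by rewrite leq_pmull // expn_gt0; lia.
have Tv_big m : 0 < m <= 8 * k - 4 -> m.-1 - 64 < Tv m.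
  by move=> _; apply: admissible_target.
have [x [x0 x_incr Cu]] := exact_divisor_counts (enum_big n_big u_enum) u_incr Tu_big.
have [y [y0 y_incr Cv]] := exact_divisor_counts (enum_big n_big v_enum) v_incr Tv_big.
exists x, y; split => // X _ dvd_blocks.
have {}Cu m : 0 < m <= 8 * k - 4 -> count_div u (x m) (X + m%:Z)%R = Tu m.
  apply: Cu => j Hj; apply: dvdz_trans (dvd_blocks j Hj).
  by rewrite dvdzE dvdn_mulr.
have {}Cv m : 0 < m <= 8 * k - 4 -> count_div v (y m) (X + m%:Z)%R = Tv m.
  apply: Cv => j Hj; apply: dvdz_trans (dvd_blocks j Hj).
  by rewrite dvdzE dvdn_mull.
split => m Hm; rewrite Cu ?Cv /Tu /Tv; try lia.
- by rewrite ifT //; lia.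
- have -> : (m - 1) %/ 8 = k - 1 by lia.
  by rewrite ifF //; apply/negbTE; rewrite -ltnNge; lia.
Qed.
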